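(* Let $n\ge1$, $q$ a prime power, and let $\mathcal{F}$ be a covering of $[n]$ with no redundant basic set. If the $\mathcal{F}$-combinatorial metric $d_{\mathcal{F}}$ on $\mathbb{F}_q^n$ admits a MacWilliams-type identity, then $\mathcal{F}$ is a $k$-partition of $[n]$ for some $k$.
   Context: For a covering $\mathcal{F}$ of $[n]$ (a family of subsets, called basic sets, whose union is $[n]$) and $x\in\mathbb{F}_q^n$ with $\mathrm{supp}(x)=\{i:x_i\neq0\}$, $\mathrm{wt}_{\mathcal{F}}(x)=\min\{|\mathcal{A}|:\mathcal{A}\subset\mathcal{F},\ \mathrm{supp}(x)\subset\bigcup_{A\in\mathcal{A}}A\}$ and $d_{\mathcal{F}}(x,y)=\mathrm{wt}_{\mathcal{F}}(x-y)$. A basic set $A$ is redundant if $A\subsetneq B$ for some $B\in\mathcal{F}$. $\mathcal{F}$ is a $k$-partition if it is a partition of $[n]$ all of whose blocks have cardinality $k$. For a linear code $\mathcal{C}\subset\mathbb{F}_q^n$, its dual is $\mathcal{C}^\perp=\{u: \sum_i u_ic_i=0\ \forall c\in\mathcal{C}\}$ and its $\mathcal{F}$-weight enumerator is $W_{\mathcal{C}}(x,y)=\sum_{c\in\mathcal{C}}x^{D-\mathrm{wt}_{\mathcal{F}}(c)}y^{\mathrm{wt}_{\mathcal{F}}(c)}$ with $D=\max_{c\in\mathcal{C}}\mathrm{wt}_{\mathcal{F}}(c)$. The metric $d_{\mathcal{F}}$ admits a MacWilliams-type identity if for all linear codes $\mathcal{C}_1,\mathcal{C}_2\subset\mathbb{F}_q^n$,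 $W_{\mathcal{C}_1}=W_{\mathcal{C}_2}$ implies $W_{\mathcal{C}_1^\perp}=W_{\mathcal{C}_2^\perp}$. *)

From HB Require Import structures.
From mathcomp Require Import all_boot all_order all_algebra all_field.
Set Implicit Arguments. Unset Strict Implicit. Unset Printing Implicit Defensive.
Import GRing.Theory.
Local Open Scope ring_scope.

Section CombMetric.
Variables (F : finFieldType) (n : nat).

Definition supp (x : 'rV[F]_n) : {set 'I_n} := [set i | x 0 i != 0].

Definition covering (fam : {set {set 'I_n}}) : Prop :=
  \bigcup_(A in fam) A = [set: 'I_n].

Definition redundant (fam : {set {set 'I_n}}) (A : {set 'I_n}) : Prop :=
  exists2 B, B \in fam & A \proper B.

(* F-weight: minimal number of basic sets covering the support.
   The default value #|fam| of the min is attained by fam itself when fam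
   is a covering, so this is exactly the minimum for coverings. *)
Definition wtF (fam : {set {set 'I_n}}) (x : 'rV[F]_n) : nat :=
  \big[minn/#|fam|]_(S : {set {set 'I_n}} |
      (S \subset fam) && (supp x \subset \bigcup_(A in S) A)) #|S|.

Definition dF (fam : {set {set 'I_n}}) (x y : 'rV[F]_n) : nat := wtF fam (x - y).

Definition dotv (u c : 'rV[F]_n) : F := \sum_(i < n) u 0 i * c 0 i.

Definition dual (C : {set 'rV[F]_n}) : {set 'rV[F]_n} :=
  [set u | [forall c in C, dotv u c == 0]].

Definition maxwt (fam : {set {set 'I_n}}) (C : {set 'rV[F]_n}) : nat :=
  \max_(c in C) wtF fam c.

(* F-weight enumerator W_C(x,y) = sum_c x^(D - wt c) y^(wt c), as an element
   of Z[x][y] ({poly {poly int}}, inner variable x, outer variable y). *)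
Definition wenum (fam : {set {set 'I_n}}) (C : {set 'rV[F]_n}) : {poly {poly int}} :=
  \sum_(c in C) ('X^(maxwt fam C - wtF fam c))%:P * 'X^(wtF fam c).

Definition code_set (C : {vspace 'rV[F]_n}) : {set 'rV[F]_n} := [set c | c \in C].

Definition admits_MacWilliams (fam : {set {set 'I_n}}) : Prop :=
  forall C1 C2 : {vspace 'rV[F]_n},
    wenum fam (code_set C1) = wenum fam (code_set C2) ->
    wenum fam (dual (code_set C1)) = wenum fam (dual (code_set C2)).

Definition k_partition (fam : {set {set 'I_n}}) (k : nat) : Prop :=
  partition fam [set: 'I_n] /\ forall A, A \in fam -> #|A| = k.

End CombMetric.

From HB Require Import structures.
From mathcomp Require Import all_boot all_algebra all_fingroup.
Set Implicit Arguments. Unset Strict Implicit. Unset Printing Implicit Defensive.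
Import GRing.Theory Num.Theory.
Local Open Scope ring_scope.

(* Suppose d_F admits a MacWilliams identity and c |-> cM (M invertible) preserves
   weights on a linear code C.  Then C and CM have equal enumerators, hence so do
   their duals; as the dual of CM is the image of the dual of C under u |-> u N with
   M N^T = 1, a map u |-> u N that never decreases weights on the dual of C must
   preserve them, the total weight (dW/dy at x = y = 1) being the same on both sides.
   For a, b in a common block, the transvection sending the line of e_b to that of
   e_b - e_a shows that adding b to a set containing a does not change its covering
   number; hence two blocks sharing a point lie in a single block and, by
   non-redundancy, coincide.  If a block A were smaller than a block B, a coordinate
   permutation exchanging A with part of B would map a pair {a', b} of B, of
   covering number 1, onto a pair meeting both A and B, of covering number 2. *)

Lemma bigminn_le (I : finType) (P : pred I) (G : I -> nat) x j :
  P j -> (\big[minn/x]_(i | P i) G i <= G j)%N.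
Proof.
move=> Pj; have : j \in index_enum I by rewrite mem_index_enum.
elim: (index_enum I) => // a r IH; rewrite inE big_cons => /orP[/eqP <-|jr].
  by rewrite Pj geq_minl.
by case: (P a); rewrite ?geq_min IH ?orbT.
Qed.

Section CoverNumber.
Variables (n : nat) (fam : {set {set 'I_n}}).
Implicit Types (T K : {set 'I_n}) (S : {set {set 'I_n}}).

Definition cover_number T : nat :=
  \big[minn/#|fam|]_(S : {set {set 'I_n}} |
      (S \subset fam) && (T \subset \bigcup_(A in S) A)) #|S|.

Lemma wtFE (F : finFieldType) (x : 'rV[F]_n) : wtF fam x = cover_number (supp x).
Proof. by []. Qed.

Lemma cover_number_le T S :
  S \subset fam -> T \subset \bigcup_(A in S) A -> (cover_number T <= #|S|)%N.
Proof. by move=> Sfam TS; apply: bigminn_le; rewrite Sfam TS. Qed.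

Lemma cover_number_ge T m : (m <= #|fam|)%N ->
  (forall S, S \subset fam -> T \subset \bigcup_(A in S) A -> (m <= #|S|)%N) ->
  (m <= cover_number T)%N.
Proof.
move=> m_le mS; rewrite /cover_number.
by elim/big_ind: _ => // [x y|S /andP[]]; [rewrite leq_min => -> -> | apply: mS].
Qed.

Lemma cover_number_attained T : covering fam ->
  exists S, [/\ S \subset fam, T \subset \bigcup_(A in S) A & #|S| = cover_number T].
Proof.
move=> cov; rewrite /cover_number; elim/big_ind: _.
- by exists fam; rewrite cov subsetT.
- by move=> x y [S1 ?] [S2 ?]; case: leqP => _; [exists S1 | exists S2].
- by move=> S /andP[Sfam TS]; exists S.
Qed.

Lemma cover_number_mono T T' : covering fam -> T \subset T' ->
  (cover_number T <= cover_number T')%N.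
Proof.
move=> cov TT'; have [S [Sfam T'S <-]] := cover_number_attained T' cov.
exact: cover_number_le Sfam (subset_trans TT' T'S).
Qed.

Lemma cover_number0 : cover_number set0 = 0%N.
Proof. by apply/eqP; rewrite -leqn0 -(cards0 {set 'I_n}) cover_number_le ?sub0set. Qed.

Lemma cover_number_block T K : K \in fam -> T != set0 -> T \subset K ->
  cover_number T = 1%N.
Proof.
move=> Kfam /set0Pn[t tT] TK; apply/anti_leq/andP; split.
  by rewrite -(cards1 K) cover_number_le ?sub1set ?big_set1.
apply: cover_number_ge => [|S _ /subsetP/(_ t tT)/bigcupP[A AS _]].
  by apply/card_gt0P; exists K.
by apply/card_gt0P; exists A.
Qed.

Lemma cover_number1_sub_block T : covering fam -> cover_number T = 1%N ->
  exists2 K, K \in fam & T \subset K.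
Proof.
move=> cov T1; have [S [Sfam TS]] := cover_number_attained T cov.
rewrite T1 => /eqP/cards1P[K SK]; exists K; first by rewrite (subsetP Sfam) ?SK ?set11.
by rewrite SK big_set1 in TS.
Qed.

Lemma nonredundant_sub_eq A K : (forall A, A \in fam -> ~ redundant fam A) ->
  A \in fam -> K \in fam -> A \subset K -> A = K.
Proof.
move=> nored Afam Kfam AK; case: (eqVneq A K) => // neqAK.
by case: (nored A Afam); exists K; rewrite // properEneq neqAK.
Qed.

End CoverNumber.

Section Supports.
Variables (F : finFieldType) (n : nat).
Implicit Types (u v : 'rV[F]_n) (W : {set 'I_n}).

Lemma supp_delta (i : 'I_n) : supp (delta_mx 0 i : 'rV[F]_n) = [set i].
Proof.
by apply/setP => j; rewrite !inE mxE eqxx /=; case: (j == i); rewrite ?oner_eq0 ?eqxx.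
Qed.

Lemma supp_eq0 u : (supp u == set0) = (u == 0).
Proof.
apply/eqP/eqP => [u0|->]; last by apply/setP => i; rewrite !inE mxE eqxx.
apply/rowP => i; rewrite mxE; apply/eqP.
by have := in_set0 i; rewrite -u0 inE => /negbFE.
Qed.

Lemma suppZ_sub (k : F) u : supp (k *: u) \subset supp u.
Proof. by apply/subsetP => i; rewrite !inE mxE mulf_eq0 negb_or => /andP[]. Qed.

Lemma suppD_sub u v : supp (u + v) \subset supp u :|: supp v.
Proof.
apply/subsetP => i; rewrite !inE mxE; apply: contraR; rewrite negb_or !negbK.
by case/andP => /eqP -> /eqP ->; rewrite addr0.
Qed.

Definition indicator W : 'rV[F]_n := \row_i (i \in W)%:R.

Lemma supp_indicator W : supp (indicator W) = W.
Proof. by apply/setP => i; rewrite inE mxE; case: (i \in W); rewrite ?eqxx ?oner_eq0. Qed.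

Lemma supp_mul_perm_mx (s : 'S_n) u : supp (u *m perm_mx s) = s @: supp u.
Proof.
have -> : u *m perm_mx s = col_perm s^-1 u by rewrite col_permE invgK.
apply/setP => i; rewrite inE mxE.
by rewrite -{2}[i](permKV s) mem_imset ?inE //; apply: perm_inj.
Qed.

Definition supported W : {vspace 'rV[F]_n} :=
  lker (linfun (mulmxr (diag_mx (\row_i ((i \notin W)%:R : F))))).

Lemma mem_supported W u : (u \in supported W) = (supp u \subset W).
Proof.
rewrite memv_ker lfunE /= mul_mx_diag; apply/eqP/subsetP => [u0 i|uW].
  rewrite inE; apply: contraR => iW.
  by have := congr1 (fun w : 'rV_n => w 0 i) u0; rewrite !mxE iW mulr1 => ->.
apply/rowP => i; rewrite !mxE; case iW: (i \in W); first by rewrite mulr0.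
have : i \notin supp u by apply: contraFN iW => /uW.
by rewrite inE negbK => /eqP ->; rewrite mul0r.
Qed.

End Supports.

Section Transvections.
Variables (F : finFieldType) (n : nat).
Implicit Types (u : 'rV[F]_n).

Definition transvection (c : F) (i j : 'I_n) : 'M[F]_n := 1%:M + c *: delta_mx i j.

Lemma tr_transvection c i j : (transvection c i j)^T = transvection c j i.
Proof. by rewrite /transvection linearD linearZ /= trmx1 trmx_delta. Qed.

Lemma transvectionNK c i j : i != j ->
  transvection (- c) i j *m transvection c i j = 1%:M.
Proof.
move=> neq_ij; rewrite /transvection mulmxDl mul1mx mulmxDr mulmx1 -scalemxAl.
by rewrite -scalemxAr mul_delta_mx_0 1?eq_sym // !scaler0 addr0 scaleNr addrK.
Qed.

Lemma mul_transvection u c i j :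
  u *m transvection c i j = u + (c * u 0 i) *: delta_mx 0 j.
Proof.
rewrite /transvection mulmxDr mulmx1 -scalemxAr -scalerA; congr (_ + _ *: _).
rewrite [in LHS](row_sum_delta u) mulmx_suml (bigD1 i) //= -scalemxAl mul_delta_mx.
by rewrite big1 ?addr0 // => k neq_ki; rewrite -scalemxAl mul_delta_mx_0 ?scaler0.
Qed.

End Transvections.

Section Duality.
Variables (F : finFieldType) (n : nat).
Implicit Types (u v c : 'rV[F]_n) (M N : 'M[F]_n) (C : {vspace 'rV[F]_n}).

Lemma dotvE u c : dotv u c = (u *m c^T) 0 0.
Proof. by rewrite !mxE; apply: eq_bigr => i _; rewrite mxE. Qed.

Lemma dotv_mulmxr u c M : dotv u (c *m M) = dotv (u *m M^T) c.
Proof. by rewrite !dotvE trmx_mul mulmxA. Qed.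

Lemma dotvZ u (k : F) v : dotv u (k *: v) = k * dotv u v.
Proof. by rewrite !dotvE linearZ /= -scalemxAr mxE. Qed.

Lemma dotv_delta u (i : 'I_n) : dotv u (delta_mx 0 i) = u 0 i.
Proof.
rewrite /dotv (bigD1 i) //= big1 ?addr0 => [|j neq_ji]; rewrite mxE.
  by rewrite !eqxx mulr1.
by rewrite (negbTE neq_ji) mulr0.
Qed.

Lemma dual_line u v : (u \in dual (code_set <[v]>%VS)) = (dotv u v == 0).
Proof.
rewrite inE; apply/forallP/idP => [/(_ v)|/eqP uv c].
  by rewrite inE memv_line.
by apply/implyP; rewrite inE => /vlineP[k ->]; rewrite dotvZ uv mulr0.
Qed.

Lemma dual_supported W u :
  (u \in dual (code_set (supported F W))) = (supp u \subset ~: W).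
Proof.
rewrite inE; apply/forallP/subsetP => [uW i iu|uW c].
  rewrite inE; apply: contraL iu => iW; have := uW (delta_mx 0 i).
  by rewrite !inE mem_supported supp_delta sub1set iW dotv_delta negbK.
apply/implyP; rewrite inE mem_supported => cW; apply/eqP/big1 => i _.
case iW: (i \in W).
  have : i \notin supp u by apply: contraL iW => /uW; rewrite inE.
  by rewrite inE negbK => /eqP ->; rewrite mul0r.
have : i \notin supp c by apply: contraFN iW => /(subsetP cW).
by rewrite inE negbK => /eqP ->; rewrite mulr0.
Qed.

Definition mxcode C M : {vspace 'rV[F]_n} :=
  (linfun (mulmxr M) @: C)%VS.

Lemma code_set_mxcode C M :
  code_set (mxcode C M) = [set c *m M | c in code_set C].
Proof.
apply/setP => w; rewrite inE; apply/memv_imgP/imsetP => -[c cC ->].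
  by exists c; rewrite ?inE ?lfunE.
by exists c; rewrite ?lfunE -?[c \in C]inE.
Qed.

Lemma dual_mxcode C M N : M *m N^T = 1%:M ->
  dual (code_set (mxcode C M)) = [set u *m N | u in dual (code_set C)].
Proof.
move=> MN; have NM : N *m M^T = 1%:M by rewrite -[N]trmxK -trmx_mul MN trmx1.
have MtN : M^T *m N = 1%:M by apply: mulmx1C.
have injN : injective (fun u : 'rV_n => u *m N).
  by apply: (can_inj (g := fun u => u *m M^T)) => u; rewrite -mulmxA NM mulmx1.
apply/setP => w; have {2}-> : w = w *m M^T *m N by rewrite -mulmxA MtN mulmx1.
rewrite (mem_imset _ _ injN) code_set_mxcode !inE.
apply/forallP/forallP => [wD c|wD c']; apply/implyP.
  by move=> cC; rewrite -dotv_mulmxr; apply: (implyP (wD _)); apply/imsetP; exists c.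
by case/imsetP=> c cC ->; have := wD c; rewrite cC dotv_mulmxr.
Qed.

End Duality.

Definition weight_total (P : {poly {poly int}}) : int :=
  ((map_poly (horner_eval 1) P)^`()).[1].

Section Weights.
Variables (F : finFieldType) (n : nat) (fam : {set {set 'I_n}}).
Implicit Types (u c : 'rV[F]_n) (D : {set 'rV[F]_n}) (K : {set 'I_n}).

Lemma wtF_block u K : K \in fam -> supp u \subset K -> wtF fam u = (u != 0).
Proof.
move=> Kfam uK; rewrite wtFE; case: (eqVneq u 0) => [->|u0].
  have /eqP -> : supp (0 : 'rV[F]_n) == set0 by rewrite supp_eq0.
  by rewrite cover_number0.
by rewrite (cover_number_block Kfam _ uK) // supp_eq0.
Qed.

Lemma wtF_mulmx_blocks c (M N : 'M[F]_n) K1 K2 : M *m N^T = 1%:M ->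
  K1 \in fam -> K2 \in fam -> supp c \subset K1 -> supp (c *m M) \subset K2 ->
  wtF fam (c *m M) = wtF fam c.
Proof.
move=> MN K1fam K2fam cK1 cMK2; rewrite (wtF_block K2fam cMK2) (wtF_block K1fam cK1).
congr negb; apply/eqP/eqP => [cM0|->]; last exact: mul0mx.
by rewrite -[c]mulmx1 -MN mulmxA cM0 mul0mx.
Qed.

Lemma weight_total_wenum D :
  weight_total (wenum fam D) = (\sum_(c in D) wtF fam c)%:R.
Proof.
rewrite /weight_total /wenum rmorph_sum raddf_sum horner_sum natr_sum.
apply: eq_bigr => c _; rewrite rmorphM /= map_polyC map_polyXn /= /horner_eval.
by rewrite hornerXn expr1n mul1r derivXn hornerMn hornerXn expr1n.
Qed.

Lemma wenum_imset D (h : 'rV[F]_n -> 'rV[F]_n) : injective h ->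
  {in D, forall u, wtF fam (h u) = wtF fam u} -> wenum fam (h @: D) = wenum fam D.
Proof.
move=> h_inj wt_h; have h_injD : {in D &, injective h} by apply: in2W.
rewrite /wenum /maxwt !big_imset //=.
by rewrite (eq_bigr _ wt_h); apply: eq_bigr => u /wt_h ->.
Qed.

Lemma wenum_imset_weight_eq D (h : 'rV[F]_n -> 'rV[F]_n) : injective h ->
  {in D, forall u, wtF fam u <= wtF fam (h u)}%N ->
  wenum fam (h @: D) = wenum fam D ->
  {in D, forall u, wtF fam (h u) = wtF fam u}.
Proof.
move=> h_inj wt_h /(congr1 weight_total)/eqP.
rewrite !weight_total_wenum big_imset /=; last by apply: in2W.
rewrite eqr_nat => /eqP sum_eq.
have le_wt u :
    u \in D -> (wtF fam u <= wtF fam (h u) ?= iff (wtF fam u == wtF fam (h u)))%N.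
  by move/wt_h/leqif_eq.
have [_] := leqif_sum le_wt; rewrite sum_eq eqxx => /esym/forall_inP eq_wt u /eq_wt.
by move/eqP.
Qed.

Lemma MacWilliams_dual_rigid (C : {vspace 'rV[F]_n}) (M N : 'M[F]_n) :
  admits_MacWilliams F fam -> M *m N^T = 1%:M ->
  {in C, forall c, wtF fam (c *m M) = wtF fam c} ->
  {in dual (code_set C), forall u, wtF fam u <= wtF fam (u *m N)}%N ->
  {in dual (code_set C), forall u, wtF fam (u *m N) = wtF fam u}.
Proof.
move=> MW MN wt_M wt_N.
have NM : N *m M^T = 1%:M by rewrite -[N]trmxK -trmx_mul MN trmx1.
have injM : injective (fun c : 'rV_n => c *m M).
  by apply: (can_inj (g := fun c => c *m N^T)) => c; rewrite -mulmxA MN mulmx1.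
have injN : injective (fun u : 'rV_n => u *m N).
  by apply: (can_inj (g := fun u => u *m M^T)) => u; rewrite -mulmxA NM mulmx1.
apply: wenum_imset_weight_eq => //; rewrite -(dual_mxcode _ MN); apply/esym/MW.
by rewrite code_set_mxcode wenum_imset // => c; rewrite inE; apply: wt_M.
Qed.

End Weights.

Section BlockMates.
Variables (F : finFieldType) (n : nat) (fam : {set {set 'I_n}}).
Hypotheses (cov : covering fam) (MW : admits_MacWilliams F fam).
Implicit Types (A B T K : {set 'I_n}).

Lemma cover_number_setU1_mate a b K T :
  a != b -> K \in fam -> a \in K -> b \in K -> a \in T -> b \notin T ->
  cover_number fam (b |: T) = cover_number fam T.
Proof.
move=> neq_ab Kfam aK bK aT bT; pose e i : 'rV[F]_n := delta_mx 0 i.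
pose M : 'M[F]_n := transvection (-1) b a; pose N : 'M[F]_n := transvection 1 a b.
have MN : M *m N^T = 1%:M by rewrite tr_transvection transvectionNK // eq_sym.
have sub_K i : i \in K -> supp (e i) \subset K by rewrite supp_delta sub1set.
have wt_M : {in <[e b]>%VS, forall c, wtF fam (c *m M) = wtF fam c}.
  move=> c /vlineP[k ->]; have cK := subset_trans (suppZ_sub k (e b)) (sub_K b bK).
  apply: (wtF_mulmx_blocks MN Kfam Kfam cK).
  rewrite mul_transvection; apply: subset_trans (suppD_sub _ _) _.
  by rewrite subUset cK (subset_trans (suppZ_sub _ _)) ?sub_K.
have dualE u : (u \in dual (code_set <[e b]>%VS)) = (u 0 b == 0).
  by rewrite dual_line dotv_delta.
have uN u : u *m N = u + u 0 a *: e b by rewrite mul_transvection mul1r.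
have uN_coord (u : 'rV_n) i : (u *m N) 0 i = u 0 i + (i == b)%:R * u 0 a.
  by rewrite uN !mxE eqxx /= mulrC.
have wt_N :
    {in dual (code_set <[e b]>%VS), forall u, wtF fam u <= wtF fam (u *m N)}%N.
  move=> u; rewrite dualE => /eqP ub0; rewrite !wtFE; apply: cover_number_mono => //.
  apply/subsetP => i; rewrite !inE uN_coord; case: (eqVneq i b) => [-> | _].
    by rewrite ub0 eqxx.
  by rewrite mul0r addr0.
have T_dual : indicator F T \in dual (code_set <[e b]>%VS).
  by rewrite dualE mxE (negbTE bT).
have := MacWilliams_dual_rigid MW MN wt_M wt_N T_dual.
rewrite !wtFE supp_indicator => <-; congr (cover_number fam _); apply/setP => i.
rewrite !inE uN_coord !mxE aT; case: (eqVneq i b) => [-> | _] /=.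
  by rewrite (negbTE bT) mul1r add0r oner_eq0.
by rewrite mul0r addr0; case: (i \in T); rewrite ?oner_eq0 ?eqxx.
Qed.

Lemma cover_number_setU_mates A B x T : B \in fam -> x \in A -> x \in B ->
  T \subset B -> cover_number fam (A :|: T) = cover_number fam A.
Proof.
move=> Bfam xA xB; have [m] := ubnP #|T|; elim: m T => // m IH T ltTm TB.
case: (set_0Vmem T) => [->|[d dT]]; first by rewrite setU0.
have ltT'm : (#|T :\ d| < m)%N by rewrite (cardsD1 d T) dT in ltTm.
have T'B : T :\ d \subset B := subset_trans (subsetDl T _) TB.
rewrite -(setD1K dT) setUCA; case dA : (d \in A).
  by rewrite (setUidPr _) ?IH // sub1set inE dA.
rewrite (cover_number_setU1_mate _ Bfam xB (subsetP TB d dT)) ?IH //.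
- by apply: contraFneq dA => <-.
- by rewrite inE xA.
- by rewrite !inE dA eqxx.
Qed.

Lemma blocks_disjoint : (forall A, A \in fam -> ~ redundant fam A) ->
  forall A B x, A \in fam -> B \in fam -> x \in A -> x \in B -> A = B.
Proof.
move=> nored A B x Afam Bfam xA xB.
have AB1 : cover_number fam (A :|: B) = 1%N.
  rewrite (cover_number_setU_mates Bfam xA xB) //.
  by apply: (cover_number_block Afam) => //; apply/set0Pn; exists x.
have [K Kfam ABK] := cover_number1_sub_block cov AB1.
have eqK D : D \in fam -> D \subset A :|: B -> D = K.
  move=> Dfam DAB.
  exact: (nonredundant_sub_eq nored Dfam Kfam (subset_trans DAB ABK)).
by rewrite (eqK A Afam (subsetUl A B)) (eqK B Bfam (subsetUr A B)).
Qed.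

End BlockMates.

Lemma exists_subset_card (T : finType) (B : {set T}) k : (k <= #|B|)%N ->
  exists2 B' : {set T}, B' \subset B & #|B'| = k.
Proof.
move=> le_kB; exists [set x in take k (enum B)].
  by apply/subsetP => x; rewrite inE => /mem_take; rewrite mem_enum.
by rewrite cardsE (card_uniqP _) ?take_uniq ?enum_uniq // size_takel -?cardE.
Qed.

Lemma exists_perm_swap (T : finType) (A B : {set T}) :
  [disjoint A & B] -> #|A| = #|B| ->
  exists s : {perm T}, [/\ {in A, forall x, s x \in B}, {in B, forall x, s x \in A}
    & forall x, x \notin A :|: B -> s x = x].
Proof.
have [m] := ubnP #|A|; elim: m A B => // m IH A B ltAm dAB cardAB.
case: (set_0Vmem A) => [A0|[a aA]].
  exists 1%g; split=> [x|x|x _]; rewrite ?perm1 //; first by rewrite A0 inE.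
  move: cardAB; rewrite A0 cards0 => /esym/eqP.
  by rewrite cards_eq0 => /eqP ->; rewrite inE.
have [b bB] : exists b, b \in B.
  by apply/card_gt0P; rewrite -cardAB card_gt0; apply/set0Pn; exists a.
have aB : a \notin B by rewrite (disjointFr dAB aA).
have bA : b \notin A by rewrite (disjointFl dAB).
have [s [sA sB sfix]] : exists s : {perm T},
    [/\ {in A :\ a, forall x, s x \in B :\ b}, {in B :\ b, forall x, s x \in A :\ a}
      & forall x, x \notin (A :\ a) :|: (B :\ b) -> s x = x].
  apply: IH; first by rewrite (cardsD1 a A) aA in ltAm.
    exact: disjointWl (subsetDl _ _) (disjointWr (subsetDl _ _) dAB).
  by move: cardAB; rewrite (cardsD1 a A) (cardsD1 b B) aA bB !add1n => -[].
have ab : a != b by apply: contraNneq bA => <-.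
have fix_ab : s a = a /\ s b = b.
  by split; apply: sfix; rewrite !inE eqxx ?(negbTE aB) ?(negbTE bA) /= ?andbF.
exists (tperm a b * s)%g; split=> x; rewrite permM.
- case: (eqVneq x a) => [-> _|xa xA]; first by rewrite tpermL fix_ab.2.
  have xb : x != b by apply: contraNneq bA => <-.
  by rewrite tpermD 1?eq_sym //; have := sA x; rewrite !inE xa xA => /(_ isT)/andP[].
- case: (eqVneq x b) => [-> _|xb xB]; first by rewrite tpermR fix_ab.1.
  have xa : x != a by apply: contraNneq aB => <-.
  by rewrite tpermD 1?eq_sym //; have := sB x; rewrite !inE xb xB => /(_ isT)/andP[].
- rewrite !inE negb_or => /andP[xA xB].
  have xa : x != a by apply: contraNneq xA => ->.
  have xb : x != b by apply: contraNneq xB => ->.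
  by rewrite tpermD 1?eq_sym // sfix // !inE negb_or !negb_and xA xB !orbT.
Qed.

Section BlockSizes.
Variables (F : finFieldType) (n : nat) (fam : {set {set 'I_n}}).
Hypotheses (cov : covering fam) (MW : admits_MacWilliams F fam).
Hypothesis fam_set0 : set0 \notin fam.
Hypothesis disj : forall A B x, A \in fam -> B \in fam -> x \in A -> x \in B -> A = B.
Implicit Types (A B T : {set 'I_n}).

Lemma disjoint_blocks A B : A \in fam -> B \in fam -> A != B -> [disjoint A & B].
Proof.
move=> Afam Bfam neqAB; rewrite -setI_eq0; apply/set0Pn => -[x /setIP[xA xB]].
by rewrite (disj Afam Bfam xA xB) eqxx in neqAB.
Qed.

Lemma cover_number_set2_blocks A B x y : A \in fam -> B \in fam -> A != B ->
  x \in A -> y \in B -> cover_number fam [set x; y] = 2.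
Proof.
move=> Afam Bfam neqAB xA yB; have AB2 : #|[set A; B]| = 2 by rewrite cards2 neqAB.
have ABfam : [set A; B] \subset fam by rewrite subUset !sub1set Afam Bfam.
apply/anti_leq/andP; split.
  rewrite -AB2 cover_number_le // big_setU1 ?big_set1 ?inE //=.
  by rewrite subUset !sub1set !inE xA yB orbT.
apply: cover_number_ge => [|S Sfam /subsetP xyS]; first by rewrite -AB2 subset_leq_card.
rewrite -AB2 subset_leq_card // subUset !sub1set.
have [D DS xD] := bigcupP (xyS x (set21 x y)).
have [D' D'S yD'] := bigcupP (xyS y (set22 x y)).
rewrite (disj Afam (subsetP Sfam D DS) xA xD).
by rewrite (disj Bfam (subsetP Sfam D' D'S) yB yD') DS.
Qed.

Lemma cover_number_swap A B B' (s : {perm 'I_n}) T :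
  A \in fam -> B \in fam -> B' \subset B -> {in B', forall x, s x \in A} ->
  (forall x, x \notin A :|: B' -> s x = x) -> T \subset ~: A ->
  (cover_number fam T <= cover_number fam (s @: T))%N.
Proof.
move=> Afam Bfam B'B sB' sfix TA.
have [S [Sfam sTS <-]] := cover_number_attained (s @: T) cov.
have cover_s t : t \in T -> exists2 D, D \in S & s t \in D.
  by move=> tT; apply/bigcupP; rewrite (subsetP sTS) ?imset_f.
have cover_out t : t \in T -> t \notin B' -> exists2 D, D \in S :\ A & t \in D.
  move=> tT tB'; have tA : t \notin A by have := subsetP TA t tT; rewrite inE.
  have [D DS] := cover_s t tT; rewrite sfix ?inE ?negb_or ?tA ?tB' // => tD.
  by exists D; rewrite // !inE DS andbT; apply: contraNneq tA => <-.
have A_in t : t \in T -> t \in B' -> A \in S.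
  move=> tT tB'; have [D DS sD] := cover_s t tT.
  by rewrite -(disj (subsetP Sfam D DS) Afam sD (sB' t tB')).
case AS : (A \in S).
  apply: (@leq_trans #|B |: (S :\ A)|).
    apply: cover_number_le.
      by rewrite subUset sub1set Bfam (subset_trans (subsetDl _ _)).
    apply/subsetP => t tT; apply/bigcupP; case tB' : (t \in B').
      by exists B; rewrite ?setU11 ?(subsetP B'B).
    by have [D DSA tD] := cover_out t tT (negbT tB'); exists D; rewrite // setU1r.
  by rewrite cardsU1 (cardsD1 A S) AS leq_add2r leq_b1.
apply: cover_number_le Sfam _; apply/subsetP => t tT; apply/bigcupP.
case tB' : (t \in B'); first by rewrite (A_in t tT tB') in AS.
by have [D /setD1P[_ DS] tD] := cover_out t tT (negbT tB'); exists D.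
Qed.

Lemma leq_card_blocks A B : A \in fam -> B \in fam -> (#|B| <= #|A|)%N.
Proof.
move=> Afam Bfam; rewrite leqNgt; apply/negP => ltAB.
have neqAB : A != B by apply: contraTneq ltAB => ->; rewrite ltnn.
have dAB := disjoint_blocks Afam Bfam neqAB.
have [B' B'B cardB'] := exists_subset_card (ltnW ltAB).
have [s [sA sB' sfix]] := exists_perm_swap (disjointWr B'B dAB) (esym cardB').
pose M : 'M[F]_n := perm_mx s.
have MM : M *m M^T = 1%:M by rewrite tr_perm_mx -perm_mxM mulgV perm_mx1.
have wt_M : {in supported F A, forall c, wtF fam (c *m M) = wtF fam c}.
  move=> c; rewrite mem_supported => cA; apply: (wtF_mulmx_blocks MM Afam Bfam cA).
  rewrite supp_mul_perm_mx; apply/subsetP => _ /imsetP[x xc ->].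
  exact: (subsetP B'B) (sA x (subsetP cA x xc)).
have wt_dual : {in dual (code_set (supported F A)),
    forall u, wtF fam u <= wtF fam (u *m M)}%N.
  move=> u; rewrite dual_supported => uA; rewrite !wtFE supp_mul_perm_mx.
  exact: (cover_number_swap Afam Bfam B'B sB' sfix uA).
have [a' a'B'] : exists a', a' \in B'.
  by apply/card_gt0P; rewrite cardB' card_gt0; apply: contraNneq fam_set0 => <-.
have /subsetPn[b bB bB'] : ~~ (B \subset B').
  by apply: contraTN ltAB => /subset_leq_card; rewrite cardB' -leqNgt.
have bA : b \notin A by rewrite (disjointFl dAB bB).
have uA : [set a'; b] \subset ~: A.
  apply/subsetP => t; rewrite !inE => /orP[] /eqP ->; last by [].
  by rewrite (disjointFl dAB (subsetP B'B a' a'B')).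
have := MacWilliams_dual_rigid MW MM wt_M wt_dual (x := indicator F [set a'; b]).
rewrite dual_supported supp_indicator uA => /(_ isT).
rewrite !wtFE supp_mul_perm_mx supp_indicator imsetU1 imset_set1 (sfix b); last first.
  by rewrite !inE negb_or bA.
rewrite (cover_number_set2_blocks Afam Bfam neqAB (sB' a' a'B') bB).
rewrite (cover_number_block Bfam) //; last by rewrite subUset !sub1set bB (subsetP B'B).
by apply/set0Pn; exists b; rewrite !inE eqxx orbT.
Qed.

End BlockSizes.

Theorem proposition4 (F : finFieldType) (n : nat) (fam : {set {set 'I_n}}) :
  (1 <= n)%N ->
  covering fam ->
  (forall A, A \in fam -> ~ redundant fam A) ->
  admits_MacWilliams F fam ->
  exists k : nat, k_partition fam k.
Proof.
move=> n_gt0 cov nored MW; pose i0 : 'I_n := Ordinal n_gt0.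
have [K0 K0fam i0K0] : exists2 K, K \in fam & i0 \in K by apply/bigcupP; rewrite cov inE.
have fam_set0 : set0 \notin fam.
  apply/negP => fam0; apply: (nored _ fam0); exists K0 => //.
  by rewrite properE sub0set /=; apply/subsetPn; exists i0; rewrite ?inE.
have disj := blocks_disjoint cov MW nored.
exists #|K0|; split=> [|A Afam].
  apply/and3P; split=> //; first exact/eqP/cov.
  by apply/trivIsetP => A B; apply: (disjoint_blocks disj).
by apply/anti_leq; rewrite !(leq_card_blocks cov MW fam_set0 disj).
Qed.
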